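(* Let $n\ge3$, $\boldsymbol\ell$ positive lengths, and $\xi$, $N>0$ smooth functions on $T^n$ depending only on $s^1$ with $\int_{T^n}\xi N\,dV_{\boldsymbol\ell}=0$; let $\mu,\tau^*\in\mathbb{R}$. Suppose either (a) $\mu,\tau^*$ are nonzero with the same sign and $c=(\mu/\tau^* )^{1/q}$, or (b) $\mu=\tau^*=0$ and $c>0$ is arbitrary. Let $r=c^{(q-2)/2}$, $\bar\tau=\tau^*+c^{-2q}\xi$, and let $(\bar g,\bar K)=(g_{r\boldsymbol\ell},\ \bar\tau(r\ell_1)^2(ds^1)^2)$ be the solution of the constraint equations generated (via the CTS-H$^*$ method with $\phi\equiv c$) by the data $(g_{\boldsymbol\ell},\mu\sigma^\flat_{\boldsymbol\ell},\tau^*,\xi,N)$. Let $$\tau^\circ=\frac{\int_{T^n}\bar\tau\,dV_{\bar g}}{\int_{T^n}1\,dV_{\bar g}},\qquad \hat{\boldsymbol\ell}=(r\ell_2,\ldots,r\ell_n).$$ If $\tau^\circ\neq0$, then $\bar g,\bar K$ are the induced metric and second fundamental form of a simple product embedding into the flat Kasner spacetime $\mathcal K_\Psi\times T^{n-1}_{\hat{\boldsymbol\ell}}$ with $\Psi=(r\ell_1)\tau^\circ$. If $\tau^\circ=0$, then $\bar g,\bar K$ are induced by a simple product embedding into a static toroidal spacetime $\mathcal C_L\times T^{n-1}_{\hat{\boldsymbol\ell}}$ for some $L>0$.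
   Context: $q=\frac{2n}{n-2}$, $\kappa=\frac{n-1}{n}$. $T^n=(\mathbb{R}/\mathbb{Z})^n$, unit coordinates $(s^1,\ldots,s^n)$; $g_{\boldsymbol\ell}=\sum_k\ell_k^2(ds^k)^2$, volume form $dV_{\boldsymbol\ell}$; $T^m_{\hat{\boldsymbol\ell}}$ is $T^m$ with $g_{\hat{\boldsymbol\ell}}$; $\sigma^\flat_{\boldsymbol\ell}=\kappa\ell_1^2(ds^1)^2-\frac1n\sum_{k\ge2}\ell_k^2(ds^k)^2$. CTS-H$^*$ method: for data $(g,\sigma,\tau^*,\xi,N)$ a solution is $(\phi>0,W)$ such that $\bar g=\phi^{q-2}g$, $\bar K=\phi^{-2}(\sigma+\frac1{2N}(L_Wg-\frac2n(\mathrm{div}W)g))+\frac{\tau^*+\phi^{-2q}\xi}{n}\bar g$ solves the Einstein constraint equations. $\mathbb{R}^{1,1}$: coordinates $(t,x)$, metric $-dt^2+dx^2$, time-oriented by $\partial_t$, $I_\pm=\{\pm t>|x|\}$; $B_\Psi$ the linear boost with matrix $\begin{pmatrix}\cosh\Psi&\sinh\Psi\\\sinh\Psi&\cosh\Psi\end{pmatrix}$; $\mathcal K_\Psi=I_+/\langle B_\Psi\rangle$ ($\Psi>0$) or $I_-/\langle B_\Psi\rangle$ ($\Psi<0$); $\mathcal C_L=\mathbb{R}^{1,1}/\langle(t,x)\mapsto(t,x+L)\rangle$. Products carry product Lorentzian metrics. A simple product embedding is $\iota(s^1,\ldots,s^n)=(\gamma(s^1),(s^2,\ldots,s^n))$ for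 a curve $\gamma$ in the 2-dimensional factor. Second fundamental form: $K(X,Y)=-\langle n,\nabla_XY\rangle$, $n$ the future unit normal. *)

From Stdlib Require Import Reals Lra ZArith.
From Coquelicot Require Import Coquelicot.
Open Scope R_scope.

(* Points of R^m (lifts of points of tori / of the universal cover of the
   ambient spacetime) are represented as functions nat -> R; only the
   first few coordinates are relevant. *)
Definition vec := nat -> R.

Fixpoint sumR (f : nat -> R) (m : nat) : R :=
  match m with O => 0 | S m' => sumR f m' + f m' end.
Fixpoint prodR (f : nat -> R) (m : nat) : R :=
  match m with O => 1 | S m' => prodR f m' * f m' end.

Definition upd (s : vec) (i : nat) (t : R) : vec :=
  fun k => if Nat.eqb k i then t else s k.

Definition smooth1 (f : R -> R) : Prop := forall k x, ex_derive_n f k x.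
Definition periodic1 (f : R -> R) : Prop := forall x, f (x + 1) = f x.

(* ---------- Torus T^n = (R/Z)^n, unit coordinates s^1..s^n  ------------
   s^{k+1} is stored at index k (so s^1 is  s 0).                         *)

Fixpoint iint (k : nat) (f : vec -> R) (s : vec) : R :=
  match k with
  | O => f s
  | S k' => RInt (fun t => iint k' f (upd s k' t)) 0 1
  end.

(* integral over T^n of f with respect to dV_l, where g_l = sum_k l_k^2 (ds^k)^2,
   so dV_l = (l_1 ... l_n) ds^1 ... ds^n  (l_{k+1} stored at  l k) *)
Definition torus_integral (n : nat) (l : nat -> R) (f : vec -> R) : R :=
  iint n (fun s => f s * prodR l n) (fun _ => 0).

Definition g_torus (l : nat -> R) (i j : nat) : R :=
  if Nat.eqb i j then (l i) ^ 2 else 0.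

Definition q_exp (n : nat) : R := 2 * INR n / (INR n - 2).

(* ---------- 2-dimensional Minkowski space R^{1,1} ----------
   points (t,x); metric -dt^2 + dx^2; time orientation d/dt *)
Definition boost (psi : R) (p : R * R) : R * R :=
  (cosh psi * fst p + sinh psi * snd p, sinh psi * fst p + cosh psi * snd p).
Definition translx (L : R) (p : R * R) : R * R := (fst p, snd p + L).

Definition in_Iplus (p : R * R) : Prop := fst p > Rabs (snd p).
Definition in_Iminus (p : R * R) : Prop := - fst p > Rabs (snd p).

Definition smooth_curve (g : R -> R * R) : Prop :=
  smooth1 (fun s => fst (g s)) /\ smooth1 (fun s => snd (g s)).

(* A closed embedded smooth curve  gamma : R/Z -> K_Psi, given by its lift
   g : R -> I_(+/-) to the covering I_(+/-) of K_Psi = I_(+/-)/<B_Psi>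
   (B_Psi^k = boost (k Psi)): the lift lies in I_+ (Psi>0) or I_- (Psi<0),
   closes up modulo the deck group, and the induced map R/Z -> K_Psi is
   injective. *)
Definition kasner_closed_embedded_curve (Psi : R) (g : R -> R * R) : Prop :=
  smooth_curve g /\
  (forall s, (0 < Psi /\ in_Iplus (g s)) \/ (Psi < 0 /\ in_Iminus (g s))) /\
  (exists m : Z, forall s, g (s + 1) = boost (IZR m * Psi) (g s)) /\
  (forall s s' (k : Z), g s = boost (IZR k * Psi) (g s') ->
      exists j : Z, s = s' + IZR j).

(* Same for C_L = R^{1,1} / <(t,x) |-> (t, x+L)> *)
Definition cyl_closed_embedded_curve (L : R) (g : R -> R * R) : Prop :=
  smooth_curve g /\
  (exists m : Z, forall s, g (s + 1) = translx (IZR m * L) (g s)) /\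
  (forall s s' (k : Z), g s = translx (IZR k * L) (g s') ->
      exists j : Z, s = s' + IZR j).

(* ---------- the product spacetime  S x T^{n-1}_{lhat} ----------
   On the universal cover, coordinates: index 0 = t, 1 = x,
   index 2+j = unit coordinate y^{j} of T^{n-1} (j = 0..n-2).
   The product metric is  -dt^2 + dx^2 + sum_j lhat_j^2 (dy^j)^2,
   which is constant in these coordinates (flat, Levi-Civita connection
   = coordinate derivatives). *)
Definition prod_metric (n : nat) (lhat : nat -> R) (u v : vec) : R :=
  - u 0%nat * v 0%nat + u 1%nat * v 1%nat
  + sumR (fun j => (lhat j) ^ 2 * u (2 + j)%nat * v (2 + j)%nat) (n - 1).

Definition simple_product_embedding (g : R -> R * R) : vec -> vec :=
  fun s a => match a with
             | O => fst (g (s 0%nat))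
             | S O => snd (g (s 0%nat))
             | S (S j) => s (S j)
             end.

Definition pderiv (F : vec -> vec) (i : nat) (s : vec) : vec :=
  fun a => Derive (fun t => F (upd s i t) a) (s i).

Definition induced_metric (n : nat) (lhat : nat -> R) (F : vec -> vec)
  (i j : nat) (s : vec) : R :=
  prod_metric n lhat (pderiv F i s) (pderiv F j s).

Definition future_unit_normal (n : nat) (lhat : nat -> R) (F : vec -> vec)
  (s : vec) (nu : vec) : Prop :=
  prod_metric n lhat nu nu = -1 /\ 0 < nu 0%nat /\
  (forall i, (i < n)%nat -> prod_metric n lhat nu (pderiv F i s) = 0).

Definition second_fundamental_form (n : nat) (lhat : nat -> R) (F : vec -> vec)
  (nu : vec) (i j : nat) (s : vec) : R :=
  - prod_metric n lhat nu (pderiv (pderiv F j) i s).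

Definition induces (n : nat) (lhat : nat -> R) (F : vec -> vec)
  (gbar Kbar : nat -> nat -> vec -> R) : Prop :=
  forall s : vec,
    (forall i j, (i < n)%nat -> (j < n)%nat ->
        induced_metric n lhat F i j s = gbar i j s) /\
    exists nu, future_unit_normal n lhat F s nu /\
      (forall i j, (i < n)%nat -> (j < n)%nat ->
        second_fundamental_form n lhat F nu i j s = Kbar i j s).

From Stdlib Require Import Reals ZArith Lra Lia List.
From Coquelicot Require Import Coquelicot.
Open Scope R_scope.

(* The data (gbar, Kbar) are those of the product of a curve gamma of constant
   speed a = r l_1 in the 2-dimensional factor with the flat torus; the only
   nonzero component Kbar_11 = tau_bar a^2 says that gamma has curvature
   tau_bar.  In
   R^{1,1} a spacelike curve with rapidity theta has velocity
   a (sinh theta, cosh theta) and curvature theta' / a, so one integrates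
   theta' = a tau_bar.  Once around s^1 the rapidity grows by
   Psi = a * int tau_bar = a tau_circ, and in the null coordinates t +- x the
   curve is carried to itself by an affine map with linear part the boost B_Psi.
   If Psi <> 0, starting at the fixed point of that map makes gamma close up in
   K_Psi.  If Psi = 0 the rapidity is periodic; choosing its initial value to
   balance the two null periods makes the monodromy a translation in x, so gamma
   closes up in C_L.  The hypotheses on N, on xi N and on mu, tau*, c only make
   (gbar, Kbar) a solution of the constraint equations; the embedding does not
   need them. *)

Lemma is_derive_eq (f : R -> R) (x l l' : R) :
  is_derive f x l -> l = l' -> is_derive f x l'.
Proof. now intros H <-. Qed.

Lemma is_derive_Rconst (c x : R) : is_derive (fun _ => c) x 0.
Proof. exact (is_derive_const c x). Qed.

Lemma is_derive_Rid (x : R) : is_derive (fun y => y) x 1.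
Proof. exact (is_derive_id x). Qed.

Lemma is_derive_Rplus (f g : R -> R) (x df dg : R) :
  is_derive f x df -> is_derive g x dg -> is_derive (fun y => f y + g y) x (df + dg).
Proof. exact (is_derive_plus f g x df dg). Qed.

Lemma is_derive_Rminus (f g : R -> R) (x df dg : R) :
  is_derive f x df -> is_derive g x dg -> is_derive (fun y => f y - g y) x (df - dg).
Proof. exact (is_derive_minus f g x df dg). Qed.

Lemma is_derive_Rmult (f g : R -> R) (x df dg : R) :
  is_derive f x df -> is_derive g x dg ->
  is_derive (fun y => f y * g y) x (df * g x + f x * dg).
Proof. intros Hf Hg. exact (is_derive_mult f g x df dg Hf Hg Rmult_comm). Qed.

Lemma is_derive_Rcomp (f g : R -> R) (x df dg : R) :
  is_derive f (g x) df -> is_derive g x dg -> is_derive (fun y => f (g y)) x (dg * df).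
Proof. exact (is_derive_comp f g x df dg). Qed.

Lemma is_derive_exp_comp (f : R -> R) (x df : R) :
  is_derive f x df -> is_derive (fun y => exp (f y)) x (df * exp (f x)).
Proof. apply (is_derive_Rcomp exp f), is_derive_exp. Qed.

Lemma is_derive_shift (f : R -> R) (x c df : R) :
  is_derive f (x + c) df -> is_derive (fun y => f (y + c)) x df.
Proof.
  intros H. apply (is_derive_eq _ _ (1 * df)); [|ring].
  apply (is_derive_Rcomp f (fun y => y + c)); [exact H|].
  apply (is_derive_eq _ _ (1 + 0)); [|ring].
  apply is_derive_Rplus; [apply is_derive_Rid|apply is_derive_Rconst].
Qed.

Definition derivative_tower (f : R -> R) : Prop :=
  exists D : nat -> R -> R,
    (forall x, D 0%nat x = f x) /\ (forall k x, is_derive (D k) x (D (S k) x)).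

Lemma derivative_tower_smooth1 (f : R -> R) : derivative_tower f -> smooth1 f.
Proof.
  intros [D [HD0 HD]].
  assert (HDn : forall k x, Derive_n f k x = D k x).
  { induction k as [|k IH]; intros x; simpl; [now rewrite HD0|].
    rewrite (Derive_ext (Derive_n f k) (D k) x IH). now apply is_derive_unique. }
  intros [|k] x; simpl; [exact I|].
  apply ex_derive_ext with (D k); [intros; now rewrite HDn|].
  eexists; apply HD.
Qed.

Lemma smooth1_derivative_tower (f : R -> R) : smooth1 f -> derivative_tower f.
Proof.
  intros H. exists (Derive_n f). split; [reflexivity|].
  intros k x. apply Derive_correct, (H (S k) x).
Qed.

Lemma derivative_tower_ext (f g : R -> R) :
  (forall x, f x = g x) -> derivative_tower f -> derivative_tower g.
Proof.
  intros E [D [HD0 HD]].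
  exists (fun k => match k with O => g | S _ => D k end). split; [reflexivity|].
  intros [|k] x; [|apply HD].
  apply is_derive_ext with (D 0%nat); [intros; now rewrite HD0|apply HD].
Qed.

Lemma derivative_tower_derive (f : R -> R) :
  derivative_tower f ->
  exists f', derivative_tower f' /\ forall x, is_derive f x (f' x).
Proof.
  intros [D [HD0 HD]]. exists (D 1%nat). split.
  - exists (fun k => D (S k)). split; [reflexivity|intros; apply HD].
  - intros x. apply is_derive_ext with (D 0%nat); [intros; now rewrite HD0|apply HD].
Qed.

Lemma derivative_tower_is_derive (f : R -> R) (x : R) :
  derivative_tower f -> is_derive f x (Derive f x).
Proof.
  intros H. destruct (derivative_tower_derive f H) as [f' [_ Hf']].
  apply Derive_correct. eexists; apply Hf'.
Qed.

Lemma derivative_tower_Derive (f : R -> R) :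
  derivative_tower f -> derivative_tower (Derive f).
Proof.
  intros H. destruct (derivative_tower_derive f H) as [f' [Hf' Hd]].
  apply derivative_tower_ext with f'; [|exact Hf'].
  intros x. symmetry. now apply is_derive_unique.
Qed.

Lemma derivative_tower_antiderivative (f g : R -> R) :
  derivative_tower g -> (forall x, is_derive f x (g x)) -> derivative_tower f.
Proof.
  intros [D [HD0 HD]] Hf.
  exists (fun k => match k with O => f | S k' => D k' end). split; [reflexivity|].
  intros [|k] x; simpl; [rewrite HD0; apply Hf|apply HD].
Qed.

Lemma derivative_tower_const (c : R) : derivative_tower (fun _ => c).
Proof.
  exists (fun k => match k with O => fun _ => c | S _ => fun _ => 0 end).
  split; [reflexivity|]. intros [|k] x; apply is_derive_Rconst.
Qed.

Lemma derivative_tower_plus (f g : R -> R) :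
  derivative_tower f -> derivative_tower g -> derivative_tower (fun x => f x + g x).
Proof.
  intros [D [HD0 HD]] [E [HE0 HE]].
  exists (fun k x => D k x + E k x). split; [intros; now rewrite HD0, HE0|].
  intros k x. apply is_derive_Rplus; auto.
Qed.

Lemma derivative_tower_scal (c : R) (f : R -> R) :
  derivative_tower f -> derivative_tower (fun x => c * f x).
Proof.
  intros [D [HD0 HD]].
  exists (fun k x => c * D k x). split; [intros; now rewrite HD0|].
  intros k x. apply is_derive_scal; auto.
Qed.

(* The k-th derivative of a product is a sum of products [D i * E j], the
   list recording the pairs (i, j) with multiplicity (Leibniz rule). *)
Fixpoint leibniz_sum (D E : nat -> R -> R) (L : list (nat * nat)) (x : R) : R :=
  match L with
  | nil => 0
  | (i, j) :: L' => D i x * E j x + leibniz_sum D E L' x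
  end.

Definition leibniz_step (L : list (nat * nat)) : list (nat * nat) :=
  flat_map (fun p => (S (fst p), snd p) :: (fst p, S (snd p)) :: nil) L.

Lemma is_derive_leibniz_sum (D E : nat -> R -> R) :
  (forall k x, is_derive (D k) x (D (S k) x)) ->
  (forall k x, is_derive (E k) x (E (S k) x)) ->
  forall L x, is_derive (leibniz_sum D E L) x (leibniz_sum D E (leibniz_step L) x).
Proof.
  intros HD HE. induction L as [|[i j] L IH]; intros x; simpl; [apply is_derive_Rconst|].
  eapply is_derive_eq.
  - apply is_derive_Rplus; [apply is_derive_Rmult; [apply HD|apply HE]|apply IH].
  - simpl. fold (leibniz_step L). ring.
Qed.

Lemma derivative_tower_mult (f g : R -> R) :
  derivative_tower f -> derivative_tower g -> derivative_tower (fun x => f x * g x).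
Proof.
  intros [D [HD0 HD]] [E [HE0 HE]].
  exists (fun k => leibniz_sum D E (Nat.iter k leibniz_step ((0, 0)%nat :: nil))).
  split; [intros; simpl; rewrite HD0, HE0; ring|].
  intros k x. apply is_derive_leibniz_sum; auto.
Qed.

(* For h' = b h, the k-th derivative of h is P_k h. *)
Fixpoint linear_ode_coefficient (b : R -> R) (k : nat) : R -> R :=
  match k with
  | O => fun _ => 1
  | S k' => fun x =>
      Derive (linear_ode_coefficient b k') x + b x * linear_ode_coefficient b k' x
  end.

Lemma derivative_tower_linear_ode (h b : R -> R) :
  derivative_tower b -> (forall x, is_derive h x (b x * h x)) -> derivative_tower h.
Proof.
  intros Hb Hh.
  assert (HP : forall k, derivative_tower (linear_ode_coefficient b k)).
  { induction k as [|k IH]; simpl; [apply derivative_tower_const|].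
    apply derivative_tower_plus;
      [now apply derivative_tower_Derive|now apply derivative_tower_mult]. }
  exists (fun k x => linear_ode_coefficient b k x * h x). split; [intros; simpl; ring|].
  intros k x. simpl. eapply is_derive_eq.
  - apply is_derive_Rmult; [apply derivative_tower_is_derive, HP|apply Hh].
  - ring.
Qed.

Lemma derivative_tower_exp_comp (f : R -> R) :
  derivative_tower f -> derivative_tower (fun x => exp (f x)).
Proof.
  intros Hf. destruct (derivative_tower_derive f Hf) as [f' [Hf' Hd]].
  apply derivative_tower_linear_ode with f'; [exact Hf'|].
  intros x. apply is_derive_exp_comp, Hd.
Qed.

Lemma derivative_tower_continuous (f : R -> R) (x : R) :
  derivative_tower f -> continuous f x.
Proof.
  intros H. apply (@ex_derive_continuous R_AbsRing R_NormedModule).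
  eexists; apply (derivative_tower_is_derive f x H).
Qed.

Lemma derivative_tower_ex_RInt (f : R -> R) (a b : R) :
  derivative_tower f -> ex_RInt f a b.
Proof.
  intros H. apply (@ex_RInt_continuous R_CompleteNormedModule).
  intros; now apply derivative_tower_continuous.
Qed.

Lemma is_derive_RInt_upper (f : R -> R) (a x : R) :
  derivative_tower f -> is_derive (fun s => RInt f a s) x (f x).
Proof.
  intros H. apply (is_derive_RInt f (RInt f a) a x).
  - apply filter_forall. intros y.
    apply (@RInt_correct R_CompleteNormedModule). now apply derivative_tower_ex_RInt.
  - now apply derivative_tower_continuous.
Qed.

Lemma derivative_tower_RInt_upper (f : R -> R) (a : R) :
  derivative_tower f -> derivative_tower (fun s => RInt f a s).
Proof.
  intros H. apply derivative_tower_antiderivative with f; [exact H|].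
  intros x. now apply is_derive_RInt_upper.
Qed.

Lemma is_derive_continuity_pt (f : R -> R) (x df : R) :
  is_derive f x df -> continuity_pt f x.
Proof.
  intros H. apply continuity_pt_filterlim.
  apply (@ex_derive_continuous R_AbsRing R_NormedModule). eexists; exact H.
Qed.

Lemma eq_of_is_derive_0 (f : R -> R) :
  (forall x, is_derive f x 0) -> forall a b, f a = f b.
Proof.
  intros H a b. destruct (MVT_gen f a b (fun _ => 0)) as [c [_ Hc]].
  - intros; apply H.
  - intros; eapply is_derive_continuity_pt; apply H.
  - lra.
Qed.

Lemma strict_increasing_of_is_derive_pos (f df : R -> R) :
  (forall x, is_derive f x (df x)) -> (forall x, 0 < df x) ->
  forall a b, a < b -> f a < f b.
Proof.
  intros H Hpos a b Hab. destruct (MVT_gen f a b df) as [c [_ Hc]].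
  - intros; apply H.
  - intros; eapply is_derive_continuity_pt; apply H.
  - assert (0 < df c * (b - a)) by (apply Rmult_lt_0_compat; [apply Hpos|lra]). lra.
Qed.

Lemma strict_increasing_inj (f : R -> R) :
  (forall a b, a < b -> f a < f b) -> forall a b, f a = f b -> a = b.
Proof.
  intros H a b E. destruct (Rtotal_order a b) as [L|[L|L]]; [|exact L|];
    apply H in L; lra.
Qed.

(* f(x + 1) - lam f(x) has zero derivative. *)
Lemma shift_relation_of_derive (f g : R -> R) (lam : R) :
  (forall x, is_derive f x (g x)) -> (forall x, g (x + 1) = lam * g x) ->
  forall s, f (s + 1) - lam * f s = f 1 - lam * f 0.
Proof.
  intros Hf Hg s. rewrite <- (Rplus_0_l 1) at 2.
  apply (eq_of_is_derive_0 (fun y => f (y + 1) - lam * f y)). intros x.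
  eapply is_derive_eq.
  - apply is_derive_Rminus; [apply is_derive_shift, Hf|apply is_derive_scal, Hf].
  - rewrite Hg. ring.
Qed.

Lemma RInt_periodic_shift (f : R -> R) :
  derivative_tower f -> periodic1 f ->
  forall s, RInt f 0 (s + 1) = RInt f 0 s + RInt f 0 1.
Proof.
  intros Hf Hp s.
  pose proof (shift_relation_of_derive (fun y => RInt f 0 y) f 1
                (fun x => is_derive_RInt_upper f 0 x Hf)
                (fun x => eq_trans (Hp x) (eq_sym (Rmult_1_l _))) s) as E.
  simpl in E. rewrite RInt_point in E. unfold zero in E; simpl in E. lra.
Qed.

Lemma shift_Z_mult (f : R -> R) (P : R) :
  (forall s, f (s + 1) = exp P * f s) ->
  forall (k : Z) s, f (s + IZR k) = exp (IZR k * P) * f s.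
Proof.
  intros H k. induction k as [|k IH|k IH] using Z.peano_ind; intros s.
  - rewrite Rplus_0_r, Rmult_0_l, exp_0. ring.
  - rewrite succ_IZR. replace (s + (IZR k + 1)) with (s + IZR k + 1) by ring.
    rewrite H, IH, Rmult_plus_distr_r, Rmult_1_l, exp_plus. ring.
  - rewrite <- Z.sub_1_r, minus_IZR. specialize (H (s + (IZR k - 1))).
    replace (s + (IZR k - 1) + 1) with (s + IZR k) in H by ring.
    rewrite IH in H. apply Rmult_eq_reg_l with (exp P); [|apply Rgt_not_eq, exp_pos].
    rewrite <- H, <- Rmult_assoc, <- exp_plus. do 2 f_equal. ring.
Qed.

Lemma shift_Z_plus (f : R -> R) (L : R) :
  (forall s, f (s + 1) = f s + L) ->
  forall (k : Z) s, f (s + IZR k) = f s + IZR k * L.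
Proof.
  intros H k. induction k as [|k IH|k IH] using Z.peano_ind; intros s.
  - rewrite Rplus_0_r. ring.
  - rewrite succ_IZR. replace (s + (IZR k + 1)) with (s + IZR k + 1) by ring.
    rewrite H, IH. ring.
  - rewrite <- Z.sub_1_r, minus_IZR. specialize (H (s + (IZR k - 1))).
    replace (s + (IZR k - 1) + 1) with (s + IZR k) in H by ring.
    rewrite IH in H. lra.
Qed.

Definition null_point (u w : R) : R * R := ((u + w) / 2, (u - w) / 2).

Lemma null_point_inj (u w u' w' : R) :
  null_point u w = null_point u' w' -> u = u' /\ w = w'.
Proof.
  unfold null_point. intros E. injection E as Et Ex. split; lra.
Qed.

Lemma boost_null_point (psi u w : R) :
  boost psi (null_point u w) = null_point (exp psi * u) (exp (- psi) * w).
Proof. unfold boost, null_point, cosh, sinh; simpl. f_equal; field. Qed.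

Lemma translx_null_point (L u w : R) :
  translx L (null_point u w) = null_point (u + L) (w - L).
Proof. unfold translx, null_point; simpl. f_equal; field. Qed.

Lemma in_Iplus_null_point (u w : R) : 0 < u -> 0 < w -> in_Iplus (null_point u w).
Proof. intros Hu Hw. unfold in_Iplus, null_point; simpl. apply Rabs_def1; lra. Qed.

Lemma in_Iminus_null_point (u w : R) : u < 0 -> w < 0 -> in_Iminus (null_point u w).
Proof. intros Hu Hw. unfold in_Iminus, null_point; simpl. apply Rabs_def1; lra. Qed.

Lemma kasner_closed_embedded_curve_intro (Psi : R) (g : R -> R * R) :
  smooth_curve g ->
  (forall s, (0 < Psi /\ in_Iplus (g s)) \/ (Psi < 0 /\ in_Iminus (g s))) ->
  (forall (k : Z) s, boost (IZR k * Psi) (g s) = g (s + IZR k)) ->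
  (forall s s', g s = g s' -> s = s') ->
  kasner_closed_embedded_curve Psi g.
Proof.
  intros Hsm Hreg Heq Hinj. split; [exact Hsm|]. split; [exact Hreg|]. split.
  - exists 1%Z. intros s. now rewrite Heq.
  - intros s s' k E. exists k. apply Hinj. now rewrite E, Heq.
Qed.

Lemma cyl_closed_embedded_curve_intro (L : R) (g : R -> R * R) :
  smooth_curve g ->
  (forall (k : Z) s, translx (IZR k * L) (g s) = g (s + IZR k)) ->
  (forall s s', g s = g s' -> s = s') ->
  cyl_closed_embedded_curve L g.
Proof.
  intros Hsm Heq Hinj. split; [exact Hsm|]. split.
  - exists 1%Z. intros s. now rewrite Heq.
  - intros s s' k E. exists k. apply Hinj. now rewrite E, Heq.
Qed.

Lemma sumR_ext (f g : nat -> R) (m : nat) :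
  (forall j, f j = g j) -> sumR f m = sumR g m.
Proof. intros H. induction m as [|m IH]; simpl; [reflexivity|]. now rewrite IH, H. Qed.

Lemma sumR_0 (f : nat -> R) (m : nat) : (forall j, f j = 0) -> sumR f m = 0.
Proof. intros H. induction m as [|m IH]; simpl; [reflexivity|]. rewrite IH, H. ring. Qed.

Lemma sumR_kronecker (c : nat -> R) (i j m : nat) :
  sumR (fun k => c k * (if Nat.eqb k i then 1 else 0) * (if Nat.eqb k j then 1 else 0)) m
  = if andb (Nat.ltb i m) (Nat.eqb i j) then c i else 0.
Proof.
  induction m as [|m IH]; [reflexivity|]. simpl sumR. rewrite IH.
  destruct (Nat.ltb_spec i m), (Nat.ltb_spec i (S m)), (Nat.eqb_spec i j),
    (Nat.eqb_spec m i), (Nat.eqb_spec m j); simpl; subst; try lia; ring.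
Qed.

Section SimpleProductEmbedding.

Variables (gamma : R -> R * R) (vt vx at_ ax : R -> R).
Hypotheses (Hvt : forall s, is_derive (fun y => fst (gamma y)) s (vt s))
  (Hvx : forall s, is_derive (fun y => snd (gamma y)) s (vx s))
  (Hat : forall s, is_derive vt s (at_ s)) (Hax : forall s, is_derive vx s (ax s)).

Let F := simple_product_embedding gamma.

Lemma pderiv_embedding_0 (s : vec) (b : nat) :
  pderiv F 0 s b = match b with O => vt (s 0%nat) | S O => vx (s 0%nat) | _ => 0 end.
Proof.
  destruct b as [|[|b]]; unfold pderiv, F, simple_product_embedding, upd; simpl.
  - apply is_derive_unique, Hvt.
  - apply is_derive_unique, Hvx.
  - apply Derive_const.
Qed.

Lemma pderiv_embedding_S (i : nat) (s : vec) (b : nat) :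
  pderiv F (S i) s b =
  match b with O => 0 | S O => 0 | S (S c) => if Nat.eqb c i then 1 else 0 end.
Proof.
  destruct b as [|[|b]]; unfold pderiv, F, simple_product_embedding, upd; simpl;
    try apply Derive_const.
  destruct (Nat.eqb b i); [apply is_derive_unique, is_derive_Rid|apply Derive_const].
Qed.

Lemma pderiv2_embedding (i j : nat) (s : vec) :
  pderiv (pderiv F j) i s 0%nat =
    (if andb (Nat.eqb i 0) (Nat.eqb j 0) then at_ (s 0%nat) else 0) /\
  pderiv (pderiv F j) i s 1%nat =
    (if andb (Nat.eqb i 0) (Nat.eqb j 0) then ax (s 0%nat) else 0).
Proof.
  unfold pderiv at 1 3. destruct j as [|j].
  - rewrite !(Derive_ext _ _ _ (fun t => pderiv_embedding_0 (upd s i t) _)).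
    destruct i as [|i]; unfold upd; simpl.
    + split; apply is_derive_unique; [apply Hat|apply Hax].
    + split; apply Derive_const.
  - rewrite !(Derive_ext _ _ _ (fun t => pderiv_embedding_S j (upd s i t) _)).
    rewrite !Derive_const. destruct i; split; reflexivity.
Qed.

Lemma simple_product_embedding_induces (n : nat) (rl : nat -> R) (k : R -> R) :
  0 < rl 0%nat ->
  (forall s, - vt s ^ 2 + vx s ^ 2 = rl 0%nat ^ 2) -> (forall s, 0 < vx s) ->
  (forall s, vx s * at_ s - vt s * ax s = k s * rl 0%nat ^ 3) ->
  induces n (fun j => rl (S j)) F (fun i j s => g_torus rl i j)
    (fun i j s => if andb (Nat.eqb i 0) (Nat.eqb j 0)
                  then k (s 0%nat) * rl 0%nat ^ 2 else 0).
Proof.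
  intros Ha Hspeed Hvx_pos Hcurv s.
  pose proof (Hspeed (s 0%nat)) as Hsp. pose proof (Hvx_pos (s 0%nat)).
  split.
  - intros i j Hi Hj. unfold induced_metric, prod_metric, g_torus.
    destruct i as [|i], j as [|j];
      rewrite ?pderiv_embedding_0, ?pderiv_embedding_S; simpl Nat.eqb; cbv iota.
    + rewrite sumR_0 by (intros; rewrite !pderiv_embedding_0; simpl; ring). lra.
    + rewrite sumR_0 by (intros; rewrite pderiv_embedding_0; simpl; ring). ring.
    + rewrite sumR_0 by (intros; rewrite pderiv_embedding_0; simpl; ring). ring.
    + rewrite (sumR_ext _ (fun c => rl (S c) ^ 2 * (if Nat.eqb c i then 1 else 0)
                                    * (if Nat.eqb c j then 1 else 0)))
        by (intros; rewrite !pderiv_embedding_S; reflexivity).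
      rewrite sumR_kronecker.
      replace (Nat.ltb i (n - 1)) with true by (symmetry; apply Nat.ltb_lt; lia).
      simpl. destruct (Nat.eqb_spec i j); subst; ring.
  - (* the unit normal is the velocity rotated by a Lorentz quarter turn *)
    exists (fun b => match b with
             | O => vx (s 0%nat) / rl 0%nat
             | S O => vt (s 0%nat) / rl 0%nat
             | _ => 0 end).
    split; [split; [|split]|].
    + unfold prod_metric. rewrite sumR_0 by (intros; simpl; ring). simpl.
      apply Rmult_eq_reg_l with (rl 0%nat ^ 2); [|apply pow_nonzero; lra].
      field_simplify; [|lra]. lra.
    + simpl. apply Rdiv_lt_0_compat; assumption.
    + intros i Hi. unfold prod_metric. rewrite sumR_0 by (intros; simpl; ring).
      destruct i as [|i]; rewrite ?pderiv_embedding_0, ?pderiv_embedding_S;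
        simpl; field; lra.
    + intros i j Hi Hj. unfold second_fundamental_form, prod_metric.
      rewrite sumR_0 by (intros; simpl; ring).
      destruct (pderiv2_embedding i j s) as [-> ->].
      destruct (andb (Nat.eqb i 0) (Nat.eqb j 0)); [|ring].
      pose proof (Hcurv (s 0%nat)). simpl.
      apply Rmult_eq_reg_l with (rl 0%nat); [|lra]. field_simplify; lra.
Qed.

End SimpleProductEmbedding.

Lemma derivative_tower_opp (f : R -> R) :
  derivative_tower f -> derivative_tower (fun x => - f x).
Proof.
  intros H. apply derivative_tower_ext with (fun x => -1 * f x); [intros; ring|].
  now apply derivative_tower_scal.
Qed.

Lemma is_derive_sinh_comp (f : R -> R) (x df : R) :
  is_derive f x df -> is_derive (fun y => sinh (f y)) x (df * cosh (f x)).
Proof.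
  apply (is_derive_Rcomp sinh f). apply is_derive_Reals, derivable_pt_lim_sinh.
Qed.

Lemma is_derive_cosh_comp (f : R -> R) (x df : R) :
  is_derive f x df -> is_derive (fun y => cosh (f y)) x (df * sinh (f x)).
Proof.
  apply (is_derive_Rcomp cosh f). apply is_derive_Reals, derivable_pt_lim_cosh.
Qed.

Lemma cosh_sqr_sub_sinh_sqr (x : R) : cosh x ^ 2 - sinh x ^ 2 = 1.
Proof.
  unfold cosh, sinh. rewrite exp_Ropp.
  assert (0 < exp x) by apply exp_pos. field. lra.
Qed.

Section PrescribedCurvature.

Variables (k : R -> R) (a : R).
Hypotheses (Hk : derivative_tower k) (Ha : 0 < a).

Definition rapidity (th0 s : R) : R := th0 + a * RInt k 0 s.

Definition curve_u (th0 u0 s : R) : R :=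
  u0 + a * RInt (fun y => exp (rapidity th0 y)) 0 s.

Definition curve_w (th0 w0 s : R) : R :=
  w0 - a * RInt (fun y => exp (- rapidity th0 y)) 0 s.

Definition prescribed_curve (th0 u0 w0 s : R) : R * R :=
  null_point (curve_u th0 u0 s) (curve_w th0 w0 s).

Lemma is_derive_rapidity (th0 x : R) : is_derive (rapidity th0) x (a * k x).
Proof.
  apply (is_derive_eq _ _ (0 + a * k x)); [|ring].
  apply is_derive_Rplus; [apply is_derive_Rconst|].
  apply is_derive_scal, is_derive_RInt_upper, Hk.
Qed.

Lemma derivative_tower_rapidity (th0 : R) : derivative_tower (rapidity th0).
Proof.
  apply derivative_tower_plus; [apply derivative_tower_const|].
  apply derivative_tower_scal, derivative_tower_RInt_upper, Hk.
Qed.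

Lemma is_derive_curve_u (th0 u0 x : R) :
  is_derive (curve_u th0 u0) x (a * exp (rapidity th0 x)).
Proof.
  apply (is_derive_eq _ _ (0 + a * exp (rapidity th0 x))); [|ring].
  apply is_derive_Rplus; [apply is_derive_Rconst|].
  apply is_derive_scal, (is_derive_RInt_upper (fun y => exp (rapidity th0 y))).
  apply derivative_tower_exp_comp, derivative_tower_rapidity.
Qed.

Lemma is_derive_curve_w (th0 w0 x : R) :
  is_derive (curve_w th0 w0) x (- (a * exp (- rapidity th0 x))).
Proof.
  apply (is_derive_eq _ _ (0 - a * exp (- rapidity th0 x))); [|ring].
  apply is_derive_Rminus; [apply is_derive_Rconst|].
  apply is_derive_scal, (is_derive_RInt_upper (fun y => exp (- rapidity th0 y))).
  apply derivative_tower_exp_comp, derivative_tower_opp, derivative_tower_rapidity.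
Qed.

Lemma curve_u_increasing (th0 u0 : R) :
  forall s s', s < s' -> curve_u th0 u0 s < curve_u th0 u0 s'.
Proof.
  apply strict_increasing_of_is_derive_pos with (fun x => a * exp (rapidity th0 x)).
  - apply is_derive_curve_u.
  - intros x. apply Rmult_lt_0_compat; [exact Ha|apply exp_pos].
Qed.

Lemma curve_w_decreasing (th0 w0 : R) :
  forall s s', s < s' -> curve_w th0 w0 s' < curve_w th0 w0 s.
Proof.
  intros s s' Hs.
  enough (- curve_w th0 w0 s < - curve_w th0 w0 s') by lra. revert s s' Hs.
  apply strict_increasing_of_is_derive_pos with (fun x => a * exp (- rapidity th0 x)).
  - intros x. eapply is_derive_eq; [apply (is_derive_opp (curve_w th0 w0))|].
    + apply is_derive_curve_w.
    + simpl. apply Ropp_involutive.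
  - intros x. apply Rmult_lt_0_compat; [exact Ha|apply exp_pos].
Qed.

Lemma prescribed_curve_inj (th0 u0 w0 : R) (s s' : R) :
  prescribed_curve th0 u0 w0 s = prescribed_curve th0 u0 w0 s' -> s = s'.
Proof.
  intros E. apply null_point_inj in E as [Eu _].
  exact (strict_increasing_inj _ (curve_u_increasing th0 u0) s s' Eu).
Qed.

Lemma smooth_prescribed_curve (th0 u0 w0 : R) :
  smooth_curve (prescribed_curve th0 u0 w0).
Proof.
  assert (Hu : derivative_tower (curve_u th0 u0)).
  { eapply derivative_tower_antiderivative; [|apply is_derive_curve_u].
    apply derivative_tower_scal, derivative_tower_exp_comp, derivative_tower_rapidity. }
  assert (Hw : derivative_tower (fun s => -1 * curve_w th0 w0 s)).
  { apply derivative_tower_scal.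
    eapply derivative_tower_antiderivative; [|apply is_derive_curve_w].
    apply derivative_tower_opp, derivative_tower_scal, derivative_tower_exp_comp,
      derivative_tower_opp, derivative_tower_rapidity. }
  split; apply derivative_tower_smooth1.
  - apply derivative_tower_ext with
      (fun s => /2 * (curve_u th0 u0 s + - (-1 * curve_w th0 w0 s))).
    + intros s. unfold prescribed_curve, null_point; simpl. field.
    + apply derivative_tower_scal, derivative_tower_plus, derivative_tower_opp; assumption.
  - apply derivative_tower_ext with (fun s => /2 * (curve_u th0 u0 s + -1 * curve_w th0 w0 s)).
    + intros s. unfold prescribed_curve, null_point; simpl. field.
    + apply derivative_tower_scal, derivative_tower_plus; assumption.
Qed.

Lemma prescribed_curve_induces (th0 u0 w0 : R) (n : nat) (rl : nat -> R) :
  rl 0%nat = a ->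
  induces n (fun j => rl (S j)) (simple_product_embedding (prescribed_curve th0 u0 w0))
    (fun i j s => g_torus rl i j)
    (fun i j s => if andb (Nat.eqb i 0) (Nat.eqb j 0)
                  then k (s 0%nat) * rl 0%nat ^ 2 else 0).
Proof.
  intros Hrl. set (th := rapidity th0).
  apply (simple_product_embedding_induces _
           (fun s => a * sinh (th s)) (fun s => a * cosh (th s))
           (fun s => a * (a * k s * cosh (th s))) (fun s => a * (a * k s * sinh (th s))));
    rewrite ?Hrl.
  - intros s. apply (is_derive_ext (fun y => / 2 * (curve_u th0 u0 y + curve_w th0 w0 y))).
    { intros; unfold prescribed_curve, null_point; simpl; field. }
    eapply is_derive_eq.
    + apply is_derive_scal, is_derive_Rplus; [apply is_derive_curve_u|apply is_derive_curve_w].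
    + unfold sinh. fold th. field.
  - intros s. apply (is_derive_ext (fun y => / 2 * (curve_u th0 u0 y - curve_w th0 w0 y))).
    { intros; unfold prescribed_curve, null_point; simpl; field. }
    eapply is_derive_eq.
    + apply is_derive_scal, is_derive_Rminus; [apply is_derive_curve_u|apply is_derive_curve_w].
    + unfold cosh. fold th. field.
  - intros s. apply is_derive_scal, is_derive_sinh_comp, is_derive_rapidity.
  - intros s. apply is_derive_scal, is_derive_cosh_comp, is_derive_rapidity.
  - exact Ha.
  - intros s. pose proof (cosh_sqr_sub_sinh_sqr (th s)). nra.
  - intros s. apply Rmult_lt_0_compat; [exact Ha|].
    unfold cosh. pose proof (exp_pos (th s)). pose proof (exp_pos (- th s)). lra.
  - intros s. transitivity (k s * a ^ 3 * (cosh (th s) ^ 2 - sinh (th s) ^ 2)); [ring|].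
    rewrite cosh_sqr_sub_sinh_sqr. ring.
Qed.

Lemma RInt_exp_rapidity_pos (eps th0 : R) :
  0 < RInt (fun y => exp (eps * rapidity th0 y)) 0 1.
Proof.
  apply RInt_gt_0; [lra|intros; apply exp_pos|]. intros y _.
  apply derivative_tower_continuous, derivative_tower_exp_comp,
    derivative_tower_scal, derivative_tower_rapidity.
Qed.

Lemma RInt_exp_rapidity_shift (eps th0 : R) :
  RInt (fun y => exp (eps * rapidity th0 y)) 0 1
  = exp (eps * th0) * RInt (fun y => exp (eps * rapidity 0 y)) 0 1.
Proof.
  rewrite <- (RInt_scal (V := R_CompleteNormedModule)).
  - apply RInt_ext. intros x _. unfold rapidity. rewrite <- exp_plus. f_equal. ring.
  - apply derivative_tower_ex_RInt, derivative_tower_exp_comp,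
      derivative_tower_scal, derivative_tower_rapidity.
Qed.

Lemma balanced_rapidity : exists th0,
  RInt (fun y => exp (rapidity th0 y)) 0 1 = RInt (fun y => exp (- rapidity th0 y)) 0 1
  /\ 0 < RInt (fun y => exp (rapidity th0 y)) 0 1.
Proof.
  pose proof (RInt_exp_rapidity_pos 1 0) as HA.
  pose proof (RInt_exp_rapidity_pos (-1) 0) as HB.
  set (A := RInt (fun y => exp (1 * rapidity 0 y)) 0 1) in *.
  set (B := RInt (fun y => exp (-1 * rapidity 0 y)) 0 1) in *.
  set (th0 := (ln B - ln A) / 2). exists th0.
  rewrite (RInt_ext (fun y => exp (rapidity th0 y)) (fun y => exp (1 * rapidity th0 y)))
    by (intros; now rewrite Rmult_1_l).
  rewrite (RInt_ext (fun y => exp (- rapidity th0 y)) (fun y => exp (-1 * rapidity th0 y)))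
    by (intros; f_equal; ring).
  split; [|apply RInt_exp_rapidity_pos].
  rewrite (RInt_exp_rapidity_shift 1 th0), (RInt_exp_rapidity_shift (-1) th0). fold A B.
  rewrite <- (exp_ln A HA), <- (exp_ln B HB), <- !exp_plus.
  f_equal. unfold th0. field.
Qed.

End PrescribedCurvature.

Section PeriodicCurvature.

Variables (k : R -> R) (a : R).
Hypotheses (Hk : derivative_tower k) (Hp : periodic1 k) (Ha : 0 < a).

Let P := a * RInt k 0 1.

Lemma exp_rapidity_shift (th0 x : R) :
  exp (rapidity k a th0 (x + 1)) = exp P * exp (rapidity k a th0 x).
Proof.
  unfold rapidity. rewrite RInt_periodic_shift by assumption.
  rewrite <- exp_plus. f_equal. unfold P. ring.
Qed.

Lemma curve_u_shift (th0 u0 s : R) :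
  curve_u k a th0 u0 (s + 1) - exp P * curve_u k a th0 u0 s
  = (1 - exp P) * u0 + a * RInt (fun y => exp (rapidity k a th0 y)) 0 1.
Proof.
  rewrite (shift_relation_of_derive _ (fun x => a * exp (rapidity k a th0 x)) (exp P)).
  - unfold curve_u. rewrite RInt_point. unfold zero; simpl. ring.
  - intros x. apply is_derive_curve_u, Hk.
  - intros x. rewrite exp_rapidity_shift. ring.
Qed.

Lemma curve_w_shift (th0 w0 s : R) :
  curve_w k a th0 w0 (s + 1) - exp (- P) * curve_w k a th0 w0 s
  = (1 - exp (- P)) * w0 - a * RInt (fun y => exp (- rapidity k a th0 y)) 0 1.
Proof.
  rewrite (shift_relation_of_derive _ (fun x => - (a * exp (- rapidity k a th0 x)))
             (exp (- P))).
  - unfold curve_w. rewrite RInt_point. unfold zero; simpl. ring.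
  - intros x. apply is_derive_curve_w, Hk.
  - intros x. rewrite !exp_Ropp, exp_rapidity_shift.
    field. split; apply Rgt_not_eq, exp_pos.
Qed.

Lemma prescribed_curve_closes_in_Kasner :
  RInt k 0 1 <> 0 ->
  exists u0 w0, kasner_closed_embedded_curve P (prescribed_curve k a 0 u0 w0).
Proof.
  intros HT.
  assert (HP : P <> 0) by (unfold P; intros E; apply Rmult_integral in E; lra).
  assert (HeP : exp P <> 1 /\ exp (- P) <> 1).
  { split; intros E; rewrite <- exp_0 in E; apply exp_inv in E; lra. }
  (* the initial null coordinates are the fixed points of the monodromy *)
  set (u0 := a * RInt (fun y => exp (rapidity k a 0 y)) 0 1 / (exp P - 1)).
  set (w0 := - (a * RInt (fun y => exp (- rapidity k a 0 y)) 0 1) / (exp (- P) - 1)).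
  exists u0, w0.
  set (u := curve_u k a 0 u0). set (w := curve_w k a 0 w0).
  assert (uS : forall s, u (s + 1) = exp P * u s).
  { intros s. pose proof (curve_u_shift 0 u0 s) as E. fold u in E.
    enough ((1 - exp P) * u0 + a * RInt (fun y => exp (rapidity k a 0 y)) 0 1 = 0) by lra.
    unfold u0. field. lra. }
  assert (wS : forall s, w (s + 1) = exp (- P) * w s).
  { intros s. pose proof (curve_w_shift 0 w0 s) as E. fold w in E.
    enough ((1 - exp (- P)) * w0 - a * RInt (fun y => exp (- rapidity k a 0 y)) 0 1 = 0)
      by lra.
    unfold w0. field. lra. }
  apply kasner_closed_embedded_curve_intro.
  - apply smooth_prescribed_curve, Hk.
  - intros s.
    pose proof (curve_u_increasing k a Hk Ha 0 u0 s (s + 1) ltac:(lra)) as Hu.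
    pose proof (curve_w_decreasing k a Hk Ha 0 w0 s (s + 1) ltac:(lra)) as Hw.
    fold u w in Hu, Hw. rewrite uS in Hu. rewrite wS in Hw.
    pose proof (exp_pos P). pose proof (exp_pos (- P)).
    unfold prescribed_curve. fold u w.
    destruct (Rlt_dec 0 P) as [Ppos|Pneg]; [left|right]; (split; [lra|]).
    + assert (1 < exp P) by (rewrite <- exp_0; apply exp_increasing; lra).
      assert (exp (- P) < 1) by (rewrite <- exp_0; apply exp_increasing; lra).
      apply in_Iplus_null_point; nra.
    + assert (exp P < 1) by (rewrite <- exp_0; apply exp_increasing; lra).
      assert (1 < exp (- P)) by (rewrite <- exp_0; apply exp_increasing; lra).
      apply in_Iminus_null_point; nra.
  - intros m s. unfold prescribed_curve. fold u w.
    rewrite boost_null_point, (shift_Z_mult u P uS), (shift_Z_mult w (- P) wS).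
    do 3 f_equal. ring.
  - now apply prescribed_curve_inj.
Qed.

Lemma prescribed_curve_closes_in_cylinder :
  RInt k 0 1 = 0 ->
  exists th0 L, 0 < L /\ cyl_closed_embedded_curve L (prescribed_curve k a th0 0 0).
Proof.
  intros HT.
  assert (HP : exp P = 1) by (unfold P; rewrite HT, Rmult_0_r; apply exp_0).
  destruct (balanced_rapidity k a Hk) as [th0 [Hbal Hpos]].
  set (L := a * RInt (fun y => exp (rapidity k a th0 y)) 0 1).
  set (u := curve_u k a th0 0). set (w := curve_w k a th0 0).
  assert (uS : forall s, u (s + 1) = u s + L).
  { intros s. pose proof (curve_u_shift th0 0 s) as E. fold u in E.
    rewrite HP in E. unfold L. lra. }
  assert (wS : forall s, w (s + 1) = w s + - L).
  { intros s. pose proof (curve_w_shift th0 0 s) as E. fold w in E.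
    rewrite exp_Ropp, HP, <- Hbal in E. unfold L. lra. }
  exists th0, L. split; [now apply Rmult_lt_0_compat|].
  apply cyl_closed_embedded_curve_intro.
  - apply smooth_prescribed_curve, Hk.
  - intros m s. unfold prescribed_curve. fold u w.
    rewrite translx_null_point, (shift_Z_plus u L uS), (shift_Z_plus w (- L) wS).
    f_equal. ring.
  - now apply prescribed_curve_inj.
Qed.

End PeriodicCurvature.

Lemma iint_first_coordinate (f : vec -> R) (g : R -> R) :
  (forall s, f s = g (s 0%nat)) ->
  forall m s, (1 <= m)%nat -> iint m f s = RInt g 0 1.
Proof.
  intros Hf m. induction m as [|[|m] IH]; intros s Hm; [lia| |].
  - simpl. apply RInt_ext. intros x _. apply Hf.
  - change (RInt (fun t => iint (S m) f (upd s (S m) t)) 0 1 = RInt g 0 1).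
    rewrite (RInt_ext _ (fun _ => RInt g 0 1)) by (intros; apply IH; lia).
    rewrite RInt_const. unfold scal; simpl. unfold mult; simpl. ring.
Qed.

Lemma prodR_pos (f : nat -> R) (m : nat) :
  (forall k, (k < m)%nat -> 0 < f k) -> 0 < prodR f m.
Proof.
  induction m as [|m IH]; intros H; simpl; [lra|].
  apply Rmult_lt_0_compat; [apply IH; intros; apply H|apply H]; lia.
Qed.

Lemma torus_mean_first_coordinate (n : nat) (l : nat -> R) (f : R -> R) :
  (1 <= n)%nat -> (forall k, (k < n)%nat -> 0 < l k) -> ex_RInt f 0 1 ->
  torus_integral n l (fun s => f (s 0%nat)) / torus_integral n l (fun _ => 1)
  = RInt f 0 1.
Proof.
  intros Hn Hl Hf. unfold torus_integral.
  pose proof (prodR_pos l n Hl) as Hpos.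
  rewrite (iint_first_coordinate _ (fun y => prodR l n * f y)) by (intros; ring || lia).
  rewrite (iint_first_coordinate _ (fun _ => prodR l n)) by (intros; ring || lia).
  rewrite (RInt_scal (V := R_CompleteNormedModule)) by exact Hf.
  rewrite RInt_const. unfold scal; simpl. unfold mult; simpl. field. lra.
Qed.

Theorem proposition7p2
  (n : nat) (hn : (3 <= n)%nat)
  (l : nat -> R) (hl : forall k, (k < n)%nat -> 0 < l k)
  (xi N : R -> R)
  (hxi : smooth1 xi) (hxip : periodic1 xi)
  (hN : smooth1 N) (hNp : periodic1 N) (hNpos : forall x, 0 < N x)
  (hint : torus_integral n l (fun s => xi (s 0%nat) * N (s 0%nat)) = 0)
  (mu tau_star c : R)
  (hcase : (mu <> 0 /\ tau_star <> 0 /\ 0 < mu * tau_star /\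
            c = Rpower (mu / tau_star) (/ q_exp n))
           \/ (mu = 0 /\ tau_star = 0 /\ 0 < c)) :
  let q := q_exp n in
  let r := Rpower c ((q - 2) / 2) in
  let tau_bar := fun s1 : R => tau_star + Rpower c (- 2 * q) * xi s1 in
  let rl := fun k : nat => r * l k in
  let gbar := fun (i j : nat) (s : vec) => g_torus rl i j in
  let Kbar := fun (i j : nat) (s : vec) =>
      if andb (Nat.eqb i 0) (Nat.eqb j 0)
      then tau_bar (s 0%nat) * (rl 0%nat) ^ 2 else 0 in
  let tau_circ := torus_integral n rl (fun s => tau_bar (s 0%nat))
                  / torus_integral n rl (fun _ => 1) in
  let lhat := fun j : nat => rl (S j) in
  (tau_circ <> 0 ->
     exists gamma : R -> R * R,
       kasner_closed_embedded_curve (rl 0%nat * tau_circ) gamma /\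
       induces n lhat (simple_product_embedding gamma) gbar Kbar) /\
  (tau_circ = 0 ->
     exists L : R, 0 < L /\
     exists gamma : R -> R * R,
       cyl_closed_embedded_curve L gamma /\
       induces n lhat (simple_product_embedding gamma) gbar Kbar).
Proof.
  intros q r tau_bar rl gbar Kbar tau_circ lhat.
  assert (Hrl : forall k, (k < n)%nat -> 0 < rl k).
  { intros k Hk. apply Rmult_lt_0_compat; [apply exp_pos|now apply hl]. }
  assert (Ha : 0 < rl 0%nat) by (apply Hrl; lia).
  assert (Htower : derivative_tower tau_bar).
  { apply derivative_tower_plus; [apply derivative_tower_const|].
    now apply derivative_tower_scal, smooth1_derivative_tower. }
  assert (Hper : periodic1 tau_bar) by (intros x; unfold tau_bar; now rewrite hxip).
  assert (Htc : tau_circ = RInt tau_bar 0 1).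
  { apply torus_mean_first_coordinate; [lia|exact Hrl|].
    now apply derivative_tower_ex_RInt. }
  split.
  - intros Hne. rewrite Htc in Hne |- *.
    destruct (prescribed_curve_closes_in_Kasner tau_bar (rl 0%nat) Htower Hper Ha Hne)
      as [u0 [w0 Hclosed]].
    eexists. split; [exact Hclosed|]. now apply prescribed_curve_induces.
  - intros Hz. rewrite Htc in Hz.
    destruct (prescribed_curve_closes_in_cylinder tau_bar (rl 0%nat) Htower Hper Ha Hz)
      as [th0 [L [HL Hclosed]]].
    exists L. split; [exact HL|]. eexists. split; [exact Hclosed|].
    now apply prescribed_curve_induces.
Qed.
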